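(* Let $X$ be a set, $B=(B,+,0)$ a unitary magma, $(A,k,q,s,p)$ a retraction point from $X$ to $B$, and $\varphi(x,b,x',b')=q\big((k(x)+s(b))+(k(x')+s(b'))\big)$. Write $0$ also for $q(0)\in X$ and set $x+x'=\varphi(x,0,x',0)$, $\xi(b,x')=\varphi(0,b,x',0)$, $\rho_{b'}(x)=\varphi(x,0,0,b')$. 1. If $A=(A,+,0)$ is a monoid (i.e. $+$ is associative), then: (a) $(X,+,q(0))$ and $(B,+,0)$ are monoids; (b) $A$ is in bijection with $\{(x,b)\in X\times B\mid \rho_b(x)=x\}$ via the mutually inverse assignments $a\mapsto(q(a),p(a))$ and $(x,b)\mapsto k(x)+s(b)$; (c) $\varphi(x,b,x',b')=\rho_{b+b'}(x+\xi(b,x'))$ for all $x,x'\in X$, $b,b'\in B$; (d) every retraction point of the form $(B,k',q',s',p')$ (from any set $Y$ to any unitary magma $C$) is composable with $(A,k,q,s,p)$. 2. If $A=(A,+,0)$ is a left loop, then: (a) $k(q(a))=a-s(p(a))$ for all $a\in A$; (b) $k(\varphi(x,b,x',b'))=\big((k(x)+s(b))+(k(x')+s(b'))\big)-s(b+b')$ for all $x,x'\in X$, $b,b'\in B$; (c) $\rho_b(x)=x$ for all $x\in X$, $b\in B$; (d) $k(\xi(b,x'))=(s(b)+k(x'))-s(b)$ for all $x'\in X$, $b\in B$; (e) $A$ is in bijection with $X\times B$ via the mutually inverse assignments $a\mapsto(q(a),p(a))$ and $(x,b)\mapsto k(x)+s(b)$.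
   Context: A unitary magma is a set with a binary operation $+$ and an element $0$ with $b+0=b=0+b$ for all $b$; morphisms preserve $+$ and $0$. Given a set $X$ and a unitary magma $B$, a retraction point from $X$ to $B$ is a tuple $(A,k,q,s,p)$ where $A=(A,+,0)$ is a unitary magma, $k\colon X\to A$ and $q\colon A\to X$ are maps, $s\colon B\to A$ and $p\colon A\to B$ are morphisms of unitary magmas, and $p(s(b))=b$, $q(k(x))=x$, $p(k(x))=0$, $q(s(b))=q(0)$, and $k(q(a))+s(p(a))=a$ for all $x\in X$, $b\in B$, $a\in A$. Composability: for a retraction point $(A,k,q,s,p)$ from $X$ to $B$ and a retraction point $(B,k',q',s',p')$ from a set $Y$ to a unitary magma $C$, let $A\times_B Y=\{(a,y)\in A\times Y\mid p(a)=k'(y)\}$ with first projection $\pi_1$, and $q''\colon A\to A\times_B Y$, $q''(a)=\big(k(q(a))+s(k'(q'(p(a)))),\ q'(p(a))\big)$; $(B,k',q',s',p')$ is composable with $(A,k,q,s,p)$ if $(A,\pi_1,q'',ss',p'p)$ is a retraction point from the set $A\times_B Y$ to $C$. A left loop is a unitary magma $(A,+,0)$ such that for all $a,c\in A$ there is a unique $u\in A$ with $a=u+c$; this $u$ is denoted $a-c$. *)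

From Stdlib Require Import ClassicalEpsilon.
Set Implicit Arguments.

Record UMagma := {
  car :> Type;
  add : car -> car -> car;
  zero : car;
  add0r : forall b, add zero b = b;
  addr0 : forall b, add b zero = b }.
Arguments add {u} _ _.
Arguments zero {u}.

Definition um_morphism {A B : UMagma} (f : A -> B) : Prop :=
  (forall a a', f (add a a') = add (f a) (f a')) /\ f zero = zero.

Definition retraction_point {X : Type} {B A : UMagma}
  (k : X -> A) (q : A -> X) (s : B -> A) (p : A -> B) : Prop :=
  um_morphism s /\ um_morphism p /\
  (forall b, p (s b) = b) /\ (forall x, q (k x) = x) /\
  (forall x, p (k x) = zero) /\ (forall b, q (s b) = q zero) /\
  (forall a, add (k (q a)) (s (p a)) = a).

Definition fibre {A B : UMagma} {Y : Type} (p : A -> B) (k' : Y -> B) : Type :=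
  {ay : A * Y | p (fst ay) = k' (snd ay)}.

Lemma fib_cond {X : Type} {B A : UMagma} (k : X -> A) (q : A -> X) (s : B -> A)
  (p : A -> B) (H : retraction_point k q s p) :
  forall a b, p (add (k (q a)) (s b)) = b.
Proof.
  destruct H as [_ [[Hp _] [Hps [_ [Hpk _]]]]].
  intros a b. rewrite Hp, Hpk, Hps. apply add0r.
Qed.

Definition qpp {X : Type} {B A : UMagma} (k : X -> A) (q : A -> X) (s : B -> A)
  (p : A -> B) (H : retraction_point k q s p) (Y : Type) (k' : Y -> B) (q' : B -> Y)
  : A -> fibre p k' :=
  fun a => exist _ (add (k (q a)) (s (k' (q' (p a)))), q' (p a))
                 (fib_cond H a (k' (q' (p a)))).

Definition composable {X : Type} {B A : UMagma} (k : X -> A) (q : A -> X) (s : B -> A)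
  (p : A -> B) (H : retraction_point k q s p)
  {Y : Type} {C : UMagma} (k' : Y -> B) (q' : B -> Y) (s' : C -> B) (p' : B -> C) : Prop :=
  retraction_point (fun z : fibre p k' => fst (proj1_sig z)) (qpp H k' q')
    (fun c => s (s' c)) (fun a => p' (p a)).

Definition phi {X : Type} {B A : UMagma} (k : X -> A) (q : A -> X) (s : B -> A)
  (x : X) (b : B) (x' : X) (b' : B) : X :=
  q (add (add (k x) (s b)) (add (k x') (s b'))).
Definition xadd {X : Type} {B A : UMagma} (k : X -> A) (q : A -> X) (s : B -> A)
  (x x' : X) : X := phi k q s x zero x' zero.
Definition xi {X : Type} {B A : UMagma} (k : X -> A) (q : A -> X) (s : B -> A)
  (b : B) (x' : X) : X := phi k q s (q zero) b x' zero.
Definition rho {X : Type} {B A : UMagma} (k : X -> A) (q : A -> X) (s : B -> A)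
  (b' : B) (x : X) : X := phi k q s x zero (q zero) b'.

Definition is_monoid {T : Type} (op : T -> T -> T) (e : T) : Prop :=
  (forall a b c, op a (op b c) = op (op a b) c) /\
  (forall a, op e a = a) /\ (forall a, op a e = a).

(** Left loops and left division a - c (the unique u with a = u + c). *)
Definition left_loop (A : UMagma) : Prop :=
  forall a c : A, exists! u : A, a = add u c.
Definition lsub {A : UMagma} (L : left_loop A) (a c : A) : A :=
  proj1_sig (constructive_indefinite_description _ (L a c)).

Definition mutually_inverse {A T : Type} (P : T -> Prop) (f : A -> T) (g : T -> A) : Prop :=
  (forall a, P (f a)) /\ (forall a, g (f a) = a) /\ (forall t, P t -> f (g t) = t).

(** In a retraction point every [a] splits as [k (q a) + s (p a)], and [k]
    identifies [X] with the kernel of [p]; so [a] is recorded by the pair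
    [(q a, p a)], and the pairs that occur are those [(x, b)] with
    [q (k x + s b) = x], i.e. [rho_b x = x].  When [+] is associative, an
    [s]-part can be moved to the right of a [k]-part:
    [s b + k x' = k (xi b x') + s b], which yields the normal form of [phi] and
    the composability of retraction points on [B].  In a left loop the
    decomposition is unique: [k (q a)] must be [a - s (p a)], whence
    [q (k x + s b) = x] for all [x, b], and [A] is in bijection with [X * B]. *)

From Stdlib Require Import ClassicalEpsilon ProofIrrelevance.

Set Implicit Arguments.

Lemma lsub_unique (A : UMagma) (L : left_loop A) (a c u : A) :
  add u c = a -> lsub L a c = u.
Proof.
  intros E. unfold lsub.
  exact (proj2 (proj2_sig (constructive_indefinite_description _ (L a c))) u (eq_sym E)).
Qed.

Lemma um_morphism_comp (A B C : UMagma) (f : A -> B) (g : B -> C) :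
  um_morphism f -> um_morphism g -> um_morphism (fun a => g (f a)).
Proof.
  intros [fD f0] [gD g0]. split.
  - intros a a'. rewrite fD, gD. reflexivity.
  - rewrite f0, g0. reflexivity.
Qed.

Lemma retract_is_monoid (A B : UMagma) (s : B -> A) (p : A -> B) :
  um_morphism s -> (forall b, p (s b) = b) ->
  (forall a a' a'' : A, add a (add a' a'') = add (add a a') a'') ->
  is_monoid (@add B) zero.
Proof.
  intros [sD _] ps addA. split; [|split; [apply add0r | apply addr0]].
  intros b b' b''.
  rewrite <- (ps (add b (add b' b''))), <- (ps (add (add b b') b'')), !sD, addA.
  reflexivity.
Qed.

Lemma fibre_ext (A B : UMagma) (Y : Type) (p : A -> B) (k' : Y -> B)
  (z z' : fibre p k') : proj1_sig z = proj1_sig z' -> z = z'.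
Proof. intros E. apply eq_sig_hprop; [intros; apply proof_irrelevance | exact E]. Qed.

Lemma mutually_inverse_full (A T : Type) (P : T -> Prop) (f : A -> T) (g : T -> A) :
  (forall t, P t) -> mutually_inverse P f g -> mutually_inverse (fun _ => True) f g.
Proof.
  intros HP (_ & gf & fg). repeat split.
  - exact gf.
  - intros t _. apply fg, HP.
Qed.

Section RetractionPoint.

Variables (X : Type) (B A : UMagma).
Variables (k : X -> A) (q : A -> X) (s : B -> A) (p : A -> B).
Hypothesis rp : retraction_point k q s p.

Lemma s_add b b' : s (add b b') = add (s b) (s b').
Proof. destruct rp as ([sD _] & _). apply sD. Qed.

Lemma s_zero : s zero = zero.
Proof. destruct rp as ([_ s0] & _). exact s0. Qed.

Lemma p_add a a' : p (add a a') = add (p a) (p a').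
Proof. destruct rp as (_ & [pD _] & _). apply pD. Qed.

Lemma p_zero : p zero = zero.
Proof. destruct rp as (_ & [_ p0] & _). exact p0. Qed.

Lemma p_s b : p (s b) = b.
Proof. destruct rp as (_ & _ & ps & _). apply ps. Qed.

Lemma q_k x : q (k x) = x.
Proof. destruct rp as (_ & _ & _ & qk & _). apply qk. Qed.

Lemma p_k x : p (k x) = zero.
Proof. destruct rp as (_ & _ & _ & _ & pk & _). apply pk. Qed.

Lemma q_s b : q (s b) = q zero.
Proof. destruct rp as (_ & _ & _ & _ & _ & qs & _). apply qs. Qed.

Lemma kq_add_sp a : add (k (q a)) (s (p a)) = a.
Proof. destruct rp as (_ & _ & _ & _ & _ & _ & kq). apply kq. Qed.

Lemma k_inj x y : k x = k y -> x = y.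
Proof. intros E. rewrite <- (q_k x), <- (q_k y), E. reflexivity. Qed.

Lemma kq_ker a : p a = zero -> k (q a) = a.
Proof. intros E. rewrite <- (kq_add_sp a) at 2. rewrite E, s_zero, addr0. reflexivity. Qed.

Lemma kq_zero : k (q zero) = zero.
Proof. apply kq_ker, p_zero. Qed.

Lemma p_k_add_s x b : p (add (k x) (s b)) = b.
Proof. rewrite p_add, p_k, p_s. apply add0r. Qed.

Lemma p_k_add_k x y : p (add (k x) (k y)) = zero.
Proof. rewrite p_add, !p_k. apply add0r. Qed.

Lemma xadd_eq x y : xadd k q s x y = q (add (k x) (k y)).
Proof. unfold xadd, phi. rewrite s_zero, !addr0. reflexivity. Qed.

Lemma rho_eq b x : rho k q s b x = q (add (k x) (s b)).
Proof. unfold rho, phi. rewrite s_zero, addr0, kq_zero, add0r. reflexivity. Qed.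

Lemma xi_eq b x : xi k q s b x = q (add (s b) (k x)).
Proof. unfold xi, phi. rewrite s_zero, addr0, kq_zero, add0r. reflexivity. Qed.

Lemma decomposition_mutually_inverse :
  mutually_inverse (fun xb : X * B => rho k q s (snd xb) (fst xb) = fst xb)
    (fun a => (q a, p a)) (fun xb => add (k (fst xb)) (s (snd xb))).
Proof.
  repeat split.
  - intros a. simpl. rewrite rho_eq, kq_add_sp. reflexivity.
  - exact kq_add_sp.
  - intros [x b] E. simpl in *. rewrite rho_eq in E. rewrite E, p_k_add_s. reflexivity.
Qed.

Section Associative.

Hypothesis addA : forall a a' a'' : A, add a (add a' a'') = add (add a a') a''.

Lemma xadd_monoid : is_monoid (xadd k q s) (q zero).
Proof.
  repeat split.
  - intros x y z. rewrite !xadd_eq, !kq_ker by apply p_k_add_k. rewrite addA. reflexivity.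
  - intros x. rewrite xadd_eq, kq_zero, add0r. apply q_k.
  - intros x. rewrite xadd_eq, kq_zero, addr0. apply q_k.
Qed.

Lemma s_add_k b x' : add (s b) (k x') = add (k (xi k q s b x')) (s b).
Proof.
  rewrite xi_eq. rewrite <- (kq_add_sp (add (s b) (k x'))) at 1.
  rewrite p_add, p_k, p_s, addr0. reflexivity.
Qed.

Lemma phi_normal_form x b x' b' :
  phi k q s x b x' b' = rho k q s (add b b') (xadd k q s x (xi k q s b x')).
Proof.
  rewrite rho_eq, xadd_eq, kq_ker by apply p_k_add_k. unfold phi.
  rewrite <- !addA, (addA (s b)), s_add_k, s_add, !addA. reflexivity.
Qed.

Lemma composable_of_assoc (Y : Type) (C : UMagma)
  (k' : Y -> B) (q' : B -> Y) (s' : C -> B) (p' : B -> C) :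
  retraction_point k' q' s' p' -> composable rp k' q' s' p'.
Proof.
  intros (s'M & p'M & p's' & q'k' & p'k' & q's' & k'q'). unfold composable.
  split; [|split; [|split; [|split; [|split; [|split]]]]].
  - apply um_morphism_comp; [exact s'M | exact (proj1 rp)].
  - apply um_morphism_comp; [exact (proj1 (proj2 rp)) | exact p'M].
  - intros c. rewrite p_s. apply p's'.
  - intros [[a y] E]. simpl in E. apply fibre_ext. simpl.
    rewrite E, q'k', <- E, kq_add_sp. reflexivity.
  - intros [[a y] E]. simpl in *. rewrite E. apply p'k'.
  - intros c. apply fibre_ext. simpl.
    rewrite q_s, p_s, p_zero, q's'. reflexivity.
  - intros a. simpl. rewrite <- addA, <- s_add, k'q'. apply kq_add_sp.
Qed.

End Associative.

Section LeftLoop.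

Variable L : left_loop A.

Lemma kq_lsub a : k (q a) = lsub L a (s (p a)).
Proof. symmetry. apply lsub_unique, kq_add_sp. Qed.

(** Both [k x] and [k (q (k x + s b))] are the left quotient [(k x + s b) - s b]. *)
Lemma q_k_add_s x b : q (add (k x) (s b)) = x.
Proof.
  apply k_inj. rewrite kq_lsub, p_k_add_s. apply lsub_unique. reflexivity.
Qed.

Lemma rho_id x b : rho k q s b x = x.
Proof. rewrite rho_eq. apply q_k_add_s. Qed.

Lemma k_phi x b x' b' :
  k (phi k q s x b x' b')
  = lsub L (add (add (k x) (s b)) (add (k x') (s b'))) (s (add b b')).
Proof. unfold phi. rewrite kq_lsub, p_add, !p_k_add_s. reflexivity. Qed.

Lemma k_xi x' b : k (xi k q s b x') = lsub L (add (s b) (k x')) (s b).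
Proof. rewrite xi_eq, kq_lsub, p_add, p_k, p_s, addr0. reflexivity. Qed.

End LeftLoop.

End RetractionPoint.

Theorem proposition6p2 (X : Type) (B A : UMagma)
  (k : X -> A) (q : A -> X) (s : B -> A) (p : A -> B)
  (H : retraction_point k q s p) :
  ( (forall a a' a'' : A, add a (add a' a'') = add (add a a') a'') ->
    (is_monoid (xadd k q s) (q zero) /\ is_monoid (@add B) zero) /\
    mutually_inverse (fun xb : X * B => rho k q s (snd xb) (fst xb) = fst xb)
      (fun a : A => (q a, p a)) (fun xb : X * B => add (k (fst xb)) (s (snd xb))) /\
    (forall (x : X) (b : B) (x' : X) (b' : B),
       phi k q s x b x' b' = rho k q s (add b b') (xadd k q s x (xi k q s b x'))) /\
    (forall (Y : Type) (C : UMagma) (k' : Y -> B) (q' : B -> Y) (s' : C -> B) (p' : B -> C),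
       retraction_point k' q' s' p' -> composable H k' q' s' p') )
  /\
  ( forall L : left_loop A,
    (forall a : A, k (q a) = lsub L a (s (p a))) /\
    (forall (x : X) (b : B) (x' : X) (b' : B),
       k (phi k q s x b x' b')
       = lsub L (add (add (k x) (s b)) (add (k x') (s b'))) (s (add b b'))) /\
    (forall (x : X) (b : B), rho k q s b x = x) /\
    (forall (x' : X) (b : B), k (xi k q s b x') = lsub L (add (s b) (k x')) (s b)) /\
    mutually_inverse (fun _ : X * B => True)
      (fun a : A => (q a, p a)) (fun xb : X * B => add (k (fst xb)) (s (snd xb))) ).
Proof.
  split.
  - intros addA. split; [split | split; [| split]].
    + exact (xadd_monoid H addA).
    + exact (retract_is_monoid p (proj1 H) (p_s H) addA).
    + exact (decomposition_mutually_inverse H).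
    + exact (phi_normal_form H addA).
    + intros Y C k' q' s' p'. apply (composable_of_assoc H addA).
  - intros L. split; [| split; [| split; [| split]]].
    + exact (kq_lsub H L).
    + exact (k_phi H L).
    + exact (rho_id H L).
    + exact (k_xi H L).
    + apply (mutually_inverse_full (fun xb => rho_id H L (fst xb) (snd xb))).
      exact (decomposition_mutually_inverse H).
Qed.
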